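(* Let $G\in\mathcal{F}$, let $C$ be a clique of maximum size in $G$ chosen among all maximum cliques so that the number of edges with exactly one endpoint in $C$ is minimal, and let $X,Y$ be a partition of the vertex set of $C$ into two nonempty sets such that every vertex outside $C$ has its set of neighbors in $C$ equal to $X$, $Y$ or $\emptyset$. Let $a=|X|$, $b=|Y|$, let $\Gamma X$ (resp. $\Gamma Y$) be the set of vertices outside $C$ whose neighborhood in $C$ is $X$ (resp. $Y$), and let $G[\Gamma X]$, $G[\Gamma Y]$ be the induced subgraphs. Then, for some nonnegative integers $l,k,m$: (i) if $b=1$ (resp. $a=1$), then $G[\Gamma X]=lK_1$ (resp. $G[\Gamma Y]=lK_1$); (ii) if $b=2$ (resp. $a=2$), then $G[\Gamma X]=lK_1\cup kK_2$ (resp. $G[\Gamma Y]=lK_1\cup kK_2$); (iii) if $b=3$ (resp. $a=3$), then $G[\Gamma X]=lK_1\cup kK_2\cup mK_3$ (resp. $G[\Gamma Y]=lK_1\cup kK_2\cup mK_3$); (iv) if $b\geq 4$ (resp. $a\geq 4$), then $G[\Gamma X]=lK_1\cup kK_2$ (resp. $G[\Gamma Y]=lK_1\cup kK_2$).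
   Context: Graphs are finite and simple; spectrum means adjacency spectrum. $\mathcal{F}$ denotes the set of connected graphs whose spectrum consists of exactly one eigenvalue $r>2$, exactly one eigenvalue $s<-1$, and all remaining eigenvalues (with multiplicity) equal to $2$ or $-1$. For such $G$ and $C$ a partition $X,Y$ as described exists. $lK_1\cup kK_2\cup mK_3$ denotes the disjoint union of $l$ isolated vertices, $k$ edges and $m$ triangles. *)

From mathcomp Require Import all_boot all_order all_algebra all_field.
Set Implicit Arguments. Unset Strict Implicit. Unset Printing Implicit Defensive.
Import Order.TTheory GRing.Theory Num.Theory.

Definition simple_graph (n : nat) (e : rel 'I_n) : Prop :=
  symmetric e /\ irreflexive e.

Definition connected_graph (n : nat) (e : rel 'I_n) : Prop :=
  forall x y : 'I_n, connect e x y.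

Definition adj_mx (n : nat) (e : rel 'I_n) : 'M[algC]_n :=
  \matrix_(i, j) (e i j)%:R%R.

(* G in F: adjacency spectrum (with multiplicity) is
   {r, s, 2^p, (-1)^q} with r > 2, s < -1 *)
Definition in_F (n : nat) (e : rel 'I_n) : Prop :=
  simple_graph e /\ connected_graph e /\
  exists (r s : algC) (p q : nat),
    (2 < r)%R /\ (s < -1)%R /\
    char_poly (adj_mx e) =
      (('X - r%:P) * ('X - s%:P) * ('X - 2%:P) ^+ p * ('X + 1) ^+ q)%R.

Definition is_clique (n : nat) (e : rel 'I_n) (C : {set 'I_n}) : bool :=
  [forall x in C, forall y in C, (x != y) ==> e x y].

Definition max_clique (n : nat) (e : rel 'I_n) (C : {set 'I_n}) : Prop :=
  is_clique e C /\ forall D : {set 'I_n}, is_clique e D -> #|D| <= #|C|.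

Definition cut_size (n : nat) (e : rel 'I_n) (C : {set 'I_n}) : nat :=
  #|[set p : 'I_n * 'I_n | [&& p.1 \in C, p.2 \notin C & e p.1 p.2]]|.

Definition nbhd_in (n : nat) (e : rel 'I_n) (C : {set 'I_n}) (v : 'I_n) :=
  [set u in C | e v u].

Definition Gamma (n : nat) (e : rel 'I_n) (C X : {set 'I_n}) : {set 'I_n} :=
  [set v | (v \notin C) && (nbhd_in e C v == X)].

(* the induced subgraph G[S] is isomorphic to l K1 \cup k K2 \cup m K3:
   S is partitioned into blocks, each a clique of size 1, 2 or 3, with
   no edges between distinct blocks, and exactly l (resp. k, m) blocks
   of size 1 (resp. 2, 3). *)
Definition union_K123 (n : nat) (e : rel 'I_n) (S : {set 'I_n})
    (l k m : nat) : Prop :=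
  exists P : {set {set 'I_n}},
    [/\ partition P S,
        (forall B, B \in P -> is_clique e B && (0 < #|B| <= 3)),
        (forall B1 B2, B1 \in P -> B2 \in P -> B1 != B2 ->
           forall x y, x \in B1 -> y \in B2 -> ~~ e x y) &
        [/\ #|[set B in P | #|B| == 1]| = l,
            #|[set B in P | #|B| == 2]| = k &
            #|[set B in P | #|B| == 3]| = m]].

(* Let A be the adjacency matrix of G.  Since r and s are simple eigenvalues and the others
   are 2 or -1, each of A + I and 2I - A has exactly one negative eigenvalue, so neither
   admits two orthogonal vectors of negative norm.  Integer vectors supported on a few vertices
   therefore forbid small induced subgraphs.  Pick x in X and y in Y.  An induced path p-q-r in
   Gamma X would span with x and y a diamond with a pendant vertex, forbidden by A + I; hence
   G[Gamma X] is a disjoint union of cliques.  A clique K in Gamma X together with X is a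
   clique, so |K| <= |Y| by maximality of C; and when |Y| >= 4 a triangle in Gamma X would glue
   a K4 to the K5 spanned by x and four vertices of Y, which 2I - A forbids. *)

From mathcomp Require Import all_boot all_order all_algebra all_field zify.
Import Order.TTheory GRing.Theory Num.Theory Num.Def.
Set Implicit Arguments. Unset Strict Implicit. Unset Printing Implicit Defensive.

Open Scope ring_scope.

Section Inertia.
Variable n : nat.
Implicit Types (M P : 'M[algC]_n) (d u v w : 'rV[algC]_n).

Lemma form_unitary_similar P M u v : P \is unitarymx ->
  form conjC (invmx P *m M *m P) u v = form conjC M (u *m invmx P) (v *m invmx P).
Proof.
move=> Pu; rewrite /form !mulmxA; congr (_ 0 0); rewrite -!mulmxA; congr (_ *m _).
by rewrite invmx_unitary // trmx_mul map_mxM trmxCK.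
Qed.

Lemma form_diag d u v :
  form conjC (diag_mx d) u v = \sum_j d 0 j * (u 0 j * (v 0 j)^*).
Proof.
rewrite /form mxE; apply: eq_bigr => j _.
by rewrite mul_mx_diag !mxE -mulrA mulrCA.
Qed.

Lemma form_diag_ge0 d u : (forall j, d 0 j \is Num.real) ->
  (forall j, d 0 j < 0 -> u 0 j = 0) -> 0 <= form conjC (diag_mx d) u u.
Proof.
move=> dR du0; rewrite form_diag; apply: sumr_ge0 => j _.
have [dj_lt0 | dj_ge0] := real_ltP (dR j) (real0 _).
  by rewrite du0 // mul0r mulr0.
by rewrite mulr_ge0 // mul_conjC_ge0.
Qed.

Definition neg_inertia_le1 M : Prop :=
  exists P (d : 'rV_n), [/\ P \is unitarymx, M = invmx P *m diag_mx d *m P,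
    forall j, d 0 j \is Num.real & forall j1 j2, d 0 j1 < 0 -> d 0 j2 < 0 -> j1 = j2].

Lemma neg_inertia_le1_no_neg_pair M u w : neg_inertia_le1 M ->
  form conjC M u w = 0 -> form conjC M w u = 0 ->
  form conjC M u u < 0 -> form conjC M w w < 0 -> False.
Proof.
case=> P [d [Pu -> dR d_neg_uniq]]; rewrite !form_unitary_similar //.
move: (u *m _) (w *m _) => {}u {}w uw0 wu0 uu_lt0 ww_lt0.
have [j0 dj0_lt0 | d_ge0] := pickP (fun j => d 0 j < 0); last first.
  have : 0 <= form conjC (diag_mx d) u u by apply: form_diag_ge0 => // j; rewrite d_ge0.
  by move/le_gtF; rewrite uu_lt0.
have [uj0 | uj0_neq0] := eqVneq (u 0 j0) 0.
  have : 0 <= form conjC (diag_mx d) u u.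
    by apply: form_diag_ge0 => // j /d_neg_uniq /(_ dj0_lt0) ->.
  by move/le_gtF; rewrite uu_lt0.
(* Cancelling the [j0] coordinate, where the only negative eigenvalue sits, leaves a vector
   of nonnegative norm. *)
pose z := w 0 j0 *: u - u 0 j0 *: w.
have : 0 <= form conjC (diag_mx d) z z.
  apply: form_diag_ge0 => // j /d_neg_uniq /(_ dj0_lt0) ->.
  by rewrite !mxE mulrC subrr.
rewrite /z !(formDl, formDr, formNl, formNr, formZl, formZr) uw0 wu0.
rewrite !mulr0 oppr0 !addr0 add0r opprK !mulrA.
have wj0_uu_le0 : w 0 j0 * (w 0 j0)^* * form conjC (diag_mx d) u u <= 0.
  by rewrite mulr_ge0_le0 ?mul_conjC_ge0 ?ltW.
have uj0_ww_lt0 : u 0 j0 * (u 0 j0)^* * form conjC (diag_mx d) w w < 0.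
  by rewrite pmulr_rlt0 ?mul_conjC_gt0.
by have := ler_ltD wj0_uu_le0 uj0_ww_lt0; rewrite addr0 => /lt_geF ->.
Qed.

End Inertia.

Lemma char_poly_similar (R : comUnitRingType) n (P B : 'M[R]_n) : P \in unitmx ->
  char_poly (invmx P *m B *m P) = char_poly B.
Proof.
move=> Pu; rewrite /char_poly /char_poly_mx !map_mxM.
have X_similar : ('X%:M : 'M[{poly R}]_n) = map_mx polyC (invmx P) *m 'X%:M *m map_mx polyC P.
  by rewrite scalar_mxC -mulmxA -map_mxM mulVmx // map_mx1 mulmx1.
rewrite [X in \det (X - _)]X_similar -mulmxBl -mulmxBr !det_mulmx mulrC mulrA.
rewrite -det_mulmx -map_mxM mulmxV //.
by rewrite map_mx1 det1 mul1r.
Qed.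

Lemma prod_XsubC_root (R : idomainType) n (d : 'I_n -> R) j :
  root (\prod_i ('X - (d i)%:P)) (d j).
Proof. by rewrite (bigD1 j) //= rootM root_XsubC eqxx. Qed.

Lemma prod_XsubC_simple (R : idomainType) n (d : 'I_n -> R) b q :
  \prod_i ('X - (d i)%:P) = ('X - b%:P) * q -> ~~ root q b ->
  forall i j, d i = b -> d j = b -> i = j.
Proof.
move=> prod_d qb0 i j di dj; apply/eqP/negPn/negP => ij.
move: prod_d; rewrite (bigD1 i) //= (bigD1 j) 1?eq_sym //= di dj.
move/(mulfI (negbT (polyXsubC_eq0 b))) => q_def.
by move: qb0; rewrite -q_def rootM root_XsubC eqxx.
Qed.

Lemma adj_mx_normal n (e : rel 'I_n) : symmetric e -> adj_mx e \is normalmx.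
Proof.
move=> e_sym; apply/normalmxP; have -> // : map_mx conjC (adj_mx e)^T = adj_mx e.
by apply/matrixP => i j; rewrite !mxE e_sym rmorph_nat.
Qed.

Lemma similar_diag_affine n (P : 'M[algC]_n) d (a c : algC) : P \in unitmx ->
  a *: (invmx P *m diag_mx d *m P) + c%:M
    = invmx P *m diag_mx (\row_j (a * d 0 j + c)) *m P.
Proof.
move=> Pu; have -> : diag_mx (\row_j (a * d 0 j + c)) = a *: diag_mx d + c%:M.
  by apply/matrixP => i j; rewrite !mxE mulrnDl mulrnAr.
by rewrite mulmxDr mulmxDl -scalemxAr -scalemxAl scalar_mxC -!mulmxA mulVmx ?mulmx1.
Qed.

Lemma neg_inertia_le1_affine n (P : 'M[algC]_n) (d : 'rV_n) (a c t : algC) :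
  P \is unitarymx -> (forall j, d 0 j \is Num.real) ->
  a \is Num.real -> c \is Num.real ->
  (forall j, a * d 0 j + c < 0 -> d 0 j = t) ->
  (forall j1 j2, d 0 j1 = t -> d 0 j2 = t -> j1 = j2) ->
  neg_inertia_le1 (a *: (invmx P *m diag_mx d *m P) + c%:M).
Proof.
move=> Pu dR aR cR neg_t simple_t; exists P, (\row_j (a * d 0 j + c)); split => //.
- by rewrite similar_diag_affine ?unitarymx_unit.
- by move=> j; rewrite mxE rpredD ?rpredM.
- by move=> j1 j2; rewrite !mxE => /neg_t + /neg_t; apply: simple_t.
Qed.

Lemma in_F_spectrum n (e : rel 'I_n) : in_F e ->
  exists (P : 'M[algC]_n) (d : 'rV_n) (r s : algC),
    [/\ P \is unitarymx, adj_mx e = invmx P *m diag_mx d *m P, 2 < r, s < -1 &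
     [/\ forall j, [\/ d 0 j = r, d 0 j = s, d 0 j = 2 | d 0 j = -1],
         forall j1 j2, d 0 j1 = r -> d 0 j2 = r -> j1 = j2 &
         forall j1 j2, d 0 j1 = s -> d 0 j2 = s -> j1 = j2]].
Proof.
move=> [[e_sym _] [_ [r [s [p [q [r_gt2 [s_ltN1 charA]]]]]]]].
have /orthomx_spectralP defA := adj_mx_normal e_sym.
set P := spectralmx _ in defA; set d := spectral_diag _ in defA.
have Pu : P \is unitarymx := spectral_unitarymx _.
exists P, d, r, s; split=> //.
pose Q (a : algC) := ('X - a%:P) * ('X - 2%:P) ^+ p * ('X + 1) ^+ q.
have rootQ (a x : algC) : root (Q a) x -> [\/ x = a, x = 2 | x = -1].
  rewrite /root !hornerE !mulf_eq0 !expf_eq0 !subr_eq0 addr_eq0.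
  case/orP => [/orP[/eqP|/andP[_ /eqP]]|/andP[_ /eqP]];
    by [constructor 1|constructor 2|constructor 3].
have prod_r : \prod_j ('X - (d 0 j)%:P) = ('X - r%:P) * Q s.
  rewrite /Q !mulrA -charA defA char_poly_similar ?unitarymx_unit //.
  by rewrite char_poly_trig ?diag_mx_is_trig //; apply: eq_bigr => j _; rewrite !mxE eqxx.
have prod_s : \prod_j ('X - (d 0 j)%:P) = ('X - s%:P) * Q r.
  by rewrite prod_r /Q !mulrA [_ * ('X - s%:P)]mulrC.
have r_gt0 : 0 < r by rewrite (lt_trans _ r_gt2) ?ltr0n.
have s_lt0 : s < 0 by rewrite (lt_trans s_ltN1) ?ltrN10.
split.
- move=> j; have := prod_XsubC_root (fun j => d 0 j) j; rewrite prod_r rootM root_XsubC.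
  by case/orP => [/eqP|/rootQ[]]; [constructor 1|constructor 2|constructor 3|constructor 4].
- apply: (prod_XsubC_simple prod_r); apply/negP => /rootQ[] r_eq.
  + by move: r_gt0; rewrite r_eq lt_gtF.
  + by move: r_gt2; rewrite r_eq ltxx.
  + by move: r_gt0; rewrite r_eq lt_gtF ?ltrN10.
- apply: (prod_XsubC_simple prod_s); apply/negP => /rootQ[] s_eq.
  + by move: s_lt0; rewrite s_eq lt_gtF.
  + by move: s_lt0; rewrite s_eq lt_gtF ?ltr0n.
  + by move: s_ltN1; rewrite s_eq ltxx.
Qed.

Lemma in_F_neg_inertia n (e : rel 'I_n) : in_F e ->
  neg_inertia_le1 (adj_mx e + 1%:M) /\ neg_inertia_le1 (2%:M - adj_mx e).
Proof.
case/in_F_spectrum => P [d [r [s [Pu -> r_gt2 s_ltN1 [d_cases simple_r simple_s]]]]].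
have r_gt0 : 0 < r by rewrite (lt_trans _ r_gt2) ?ltr0n.
have s_lt0 : s < 0 by rewrite (lt_trans s_ltN1) ?ltrN10.
have dR j : d 0 j \is Num.real.
  case: (d_cases j) => ->;
    by [apply: gtr0_real | apply: ltr0_real | apply: realn | rewrite realN real1].
split.
- rewrite -[invmx P *m _ *m _]scale1r.
  apply: (neg_inertia_le1_affine (t := s)) => // j; rewrite mul1r.
  case: (d_cases j) => -> //.
  + by rewrite lt_gtF // addr_gt0.
  + by rewrite lt_gtF // addr_gt0 ?ltr0n.
  + by rewrite addNr ltxx.
- rewrite -scaleN1r addrC; apply: (neg_inertia_le1_affine (t := r)) => // [|j].
    by rewrite realN real1.
  rewrite mulN1r; case: (d_cases j) => -> //.
  + by rewrite lt_gtF // addr_gt0 ?oppr_gt0 ?ltr0n.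
  + by rewrite addNr ltxx.
  + by rewrite opprK lt_gtF // addr_gt0 ?ltr0n.
Qed.

(* Indices are natural numbers rather than ordinals so that [gram] on explicit data reduces
   under [vm_compute]; sums over ['I_k] do not. *)
Section IntegerCertificates.
Variables (k : nat) (N : nat -> nat -> int).

Definition gram (c c' : nat -> int) : int :=
  \sum_(0 <= i < k) \sum_(0 <= j < k) c i * c' j * N i j.

Definition neg_pair (c c' : nat -> int) : bool :=
  [&& gram c c' == 0, gram c' c == 0, gram c c < 0 & gram c' c' < 0].

Definition combination n (vs : nat -> 'I_n) (c : nat -> int) : 'rV[algC]_n :=
  \sum_(0 <= i < k) (c i)%:~R *: delta_mx 0 (vs i).

Lemma form_combination n (M : 'M[algC]_n) vs c c' :
  {in gtn k &, forall i j, M (vs i) (vs j) = (N i j)%:~R} ->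
  form conjC M (combination vs c) (combination vs c') = (gram c c')%:~R.
Proof.
move=> MN; rewrite /combination /gram rmorph_sum.
rewrite (big_morph (form conjC M ^~ _) (fun u v => formDl _ _ u v _) (form0l _ _ _)).
apply: eq_big_nat => i /andP[_ ik]; rewrite formZl.
rewrite (big_morph (form conjC M _) (formDr _ _ _) (form0r _ _ _)) mulr_sumr rmorph_sum.
apply: eq_big_nat => j /andP[_ jk]; rewrite formZr formee MN ?inE //.
by rewrite !rmorphM /= !rmorph_int mulrA.
Qed.

Lemma neg_inertia_le1_no_neg_pair_int n (M : 'M[algC]_n) vs c c' :
  neg_inertia_le1 M -> {in gtn k &, forall i j, M (vs i) (vs j) = (N i j)%:~R} ->
  ~~ neg_pair c c'.
Proof.
move=> M_inertia MN; apply/and4P => -[/eqP cc'0 /eqP c'c0 cc_lt0 c'c'_lt0].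
apply: (neg_inertia_le1_no_neg_pair (u := combination vs c) (w := combination vs c') M_inertia);
  by rewrite !(form_combination _ _ MN) ?cc'0 ?c'c0 ?ltrz0.
Qed.

End IntegerCertificates.

Definition induced_copy n (e : rel 'I_n) k (h : rel nat) : Prop :=
  exists vs : nat -> 'I_n,
    {in gtn k &, injective vs} /\ {in gtn k &, forall i j, e (vs i) (vs j) = h i j}.

Section InducedCopy.
Variables (k : nat) (h : rel nat).

Definition add1_pattern i j : int := (h i j)%:R + (i == j)%:R.
Definition sub2_pattern i j : int := 2 *+ (i == j) - (h i j)%:R.

Lemma in_F_no_induced_copy_add1 n (e : rel 'I_n) c c' :
  in_F e -> neg_pair k add1_pattern c c' -> ~ induced_copy e k h.
Proof.
case/in_F_neg_inertia => A1 _ cert [vs [vs_inj vs_h]]; apply/negP: cert.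
apply: (neg_inertia_le1_no_neg_pair_int (vs := vs) _ _ A1) => i j ik jk.
by rewrite !mxE vs_h // (inj_in_eq vs_inj) // rmorphD /= !rmorph_nat.
Qed.

Lemma in_F_no_induced_copy_sub2 n (e : rel 'I_n) c c' :
  in_F e -> neg_pair k sub2_pattern c c' -> ~ induced_copy e k h.
Proof.
case/in_F_neg_inertia => _ A2 cert [vs [vs_inj vs_h]]; apply/negP: cert.
apply: (neg_inertia_le1_no_neg_pair_int (vs := vs) _ _ A2) => i j ik jk.
by rewrite !mxE vs_h // (inj_in_eq vs_inj) // rmorphB rmorphMn /= !rmorph_nat.
Qed.

End InducedCopy.

Close Scope ring_scope.

Lemma clique_adj n (e : rel 'I_n) K a b :
  is_clique e K -> a \in K -> b \in K -> a != b -> e a b.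
Proof.
move=> K_clique aK bK ab.
by move/forallP/(_ a): K_clique; rewrite aK => /forallP/(_ b); rewrite bK ab.
Qed.

Definition P3_free n (e : rel 'I_n) (S : {set 'I_n}) : Prop :=
  forall p q r, p \in S -> q \in S -> r \in S -> e p q -> e q r -> p != r -> e p r.

Definition clique_le n (e : rel 'I_n) (S : {set 'I_n}) (b : nat) : Prop :=
  forall K : {set 'I_n}, K \subset S -> is_clique e K -> #|K| <= b.

Section P3Free.
Variables (n : nat) (e : rel 'I_n) (S : {set 'I_n}).
Hypotheses (e_sym : symmetric e) (S_P3_free : P3_free e S).

(* In a P3-free graph the closed neighbourhoods within S are cliques partitioning S. *)
Definition cblock x := [set y in S | (y == x) || e x y].

Lemma cblock_id x : x \in S -> x \in cblock x.
Proof. by move=> xS; rewrite inE xS eqxx. Qed.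

Lemma cblock_sub x : cblock x \subset S.
Proof. by apply/subsetP => y; rewrite inE => /andP[]. Qed.

Lemma cblock_eq x y : x \in S -> y \in cblock x -> cblock y = cblock x.
Proof.
move=> xS; rewrite inE => /andP[yS /orP[/eqP -> // | exy]].
apply/setP => z; rewrite !inE; case zS: (z \in S) => //=.
have [-> | zx] := eqVneq z x; first by rewrite e_sym exy orbT.
have [-> | zy] := eqVneq z y; first by rewrite exy orbT.
apply/idP/idP => ez.
- by apply: (S_P3_free xS yS zS exy ez); rewrite eq_sym.
- by apply: (S_P3_free yS xS zS _ ez); rewrite 1?e_sym // eq_sym.
Qed.

Lemma cblock_clique x : x \in S -> is_clique e (cblock x).
Proof.
move=> xS; apply/forallP => y; apply/implyP => yB; apply/forallP => z.
apply/implyP => zB; apply/implyP => yz.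
move: yB zB; rewrite !inE => /andP[yS /orP[/eqP ey | exy]] /andP[zS /orP[/eqP ez | exz]].
- by move: yz; rewrite ey ez eqxx.
- by rewrite ey.
- by rewrite ez e_sym.
- by apply: (S_P3_free yS xS zS) => //; rewrite e_sym.
Qed.

Definition cblocks := [set cblock x | x in S].

Lemma cblocksP B : B \in cblocks -> exists2 x, x \in S & B = cblock x.
Proof. by case/imsetP => x xS ->; exists x. Qed.

Lemma cblocks_partition : partition cblocks S.
Proof.
apply/and3P; split.
- apply/eqP/setP => z; apply/bigcupP/idP => [[B /cblocksP[x _ ->]] | zS].
    exact/subsetP/cblock_sub.
  by exists (cblock z); [apply: imset_f | apply: cblock_id].
- apply/trivIsetP => _ _ /cblocksP[x1 x1S ->] /cblocksP[x2 x2S ->] neq.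
  apply/pred0P => z /=; apply/negP => /andP[z1 z2].
  by move: neq; rewrite -(cblock_eq x1S z1) -(cblock_eq x2S z2) eqxx.
- by apply/imsetP => -[x xS blk0]; move: (cblock_id xS); rewrite -blk0 inE.
Qed.

Lemma cblocks_nadj B1 B2 : B1 \in cblocks -> B2 \in cblocks -> B1 != B2 ->
  forall x y, x \in B1 -> y \in B2 -> ~~ e x y.
Proof.
move=> /cblocksP[x1 x1S ->] /cblocksP[x2 x2S ->] neq x y xB1 yB2; apply/negP => exy.
have xS : x \in S by apply/(subsetP (cblock_sub x1)).
have yB : y \in cblock x by rewrite inE exy orbT andbT; apply/(subsetP (cblock_sub x2)).
by move: neq; rewrite -(cblock_eq x1S xB1) -(cblock_eq x2S yB2) -(cblock_eq xS yB) eqxx.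
Qed.

Lemma union_K123_of_P3_free b : b <= 3 -> clique_le e S b ->
  exists l k m, [/\ union_K123 e S l k m, b <= 1 -> k = 0 & b <= 2 -> m = 0].
Proof.
move=> b_le3 S_clique_le.
have card_cblocks B : B \in cblocks -> 0 < #|B| <= b.
  case/cblocksP => x xS ->; rewrite card_gt0; apply/andP; split.
    by apply/set0Pn; exists x; apply: cblock_id.
  by apply: S_clique_le; [apply: cblock_sub | apply: cblock_clique].
have no_size_gt_b i : b < i -> #|[set B in cblocks | #|B| == i]| = 0.
  move=> b_lt_i; apply/eqP; rewrite cards_eq0; apply/eqP/setP => B; rewrite !inE.
  apply/negbTE/andP => -[/card_cblocks/andP[_ B_le_b] /eqP B_i].
  by move: b_lt_i; rewrite -B_i ltnNge B_le_b.
exists #|[set B in cblocks | #|B| == 1]|, #|[set B in cblocks | #|B| == 2]|,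
  #|[set B in cblocks | #|B| == 3]|.
split; [exists cblocks; split => // | move=> ?; exact: no_size_gt_b ..].
- exact: cblocks_partition.
- move=> B BP; have /andP[-> B_le_b] := card_cblocks B BP.
  rewrite (leq_trans B_le_b b_le3) !andbT.
  by case/cblocksP: BP => x xS ->; apply: cblock_clique.
- exact: cblocks_nadj.
Qed.

End P3Free.

(* 0 - 1 - 2 is an induced path, 3 is adjacent to 0, 1, 2 and 4, and 4 is a pendant vertex. *)
Definition diamond_pendant : rel nat := fun i j =>
  nth 0 (nth [::] [:: [:: 0; 1; 0; 1; 0];
                      [:: 1; 0; 1; 1; 0];
                      [:: 0; 1; 0; 1; 0];
                      [:: 1; 1; 1; 0; 1];
                      [:: 0; 0; 0; 1; 0]] i) j == 1.

Definition K4_K5_glued : rel nat := fun i j =>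
  (i != j) && ((i <= 3) && (j <= 3) || (3 <= i) && (3 <= j)).

Lemma in_F_no_diamond_pendant n (e : rel 'I_n) : in_F e -> ~ induced_copy e 5 diamond_pendant.
Proof.
move=> e_F; apply: (in_F_no_induced_copy_add1 e_F
  (c := nth 0%R [:: -1; 1; -1; 0; 0]%R) (c' := nth 0%R [:: 0; -1; 0; 1; -1]%R)).
by rewrite /neg_pair /gram unlock; vm_compute.
Qed.

Lemma in_F_no_K4_K5_glued n (e : rel 'I_n) : in_F e -> ~ induced_copy e 8 K4_K5_glued.
Proof.
move=> e_F; apply: (in_F_no_induced_copy_sub2 e_F
  (c := nth 0%R [:: 0; 0; 0; 0; 1; 1; 1; 1]%R) (c' := nth 0%R [:: 2; 2; 2; 1; -1; -1; -1; -1]%R)).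
by rewrite /neg_pair /gram unlock; vm_compute.
Qed.

Lemma uniq_seq_of_card (T : finType) (A : {set T}) k : k <= #|A| ->
  exists s : seq T, [/\ size s = k, uniq s & {subset s <= A}].
Proof.
move=> k_le; exists (take k (enum A)); split.
- by rewrite size_takel // -cardE.
- by rewrite take_uniq ?enum_uniq.
- by move=> x /mem_take; rewrite mem_enum.
Qed.

Lemma induced_copy_nth n (e : rel 'I_n) (x0 : 'I_n) (s : seq 'I_n) (h : rel nat) :
  uniq s -> {in gtn (size s) &, forall i j, e (nth x0 s i) (nth x0 s j) = h i j} ->
  induced_copy e (size s) h.
Proof.
move=> s_uniq s_h; exists (nth x0 s); split => // i j ilt jlt /eqP.
by rewrite nth_uniq // => /eqP.
Qed.

Section Gamma.
Variables (n : nat) (e : rel 'I_n) (C X Y : {set 'I_n}).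
Hypotheses (e_simple : simple_graph e) (C_clique : is_clique e C)
  (XUY : X :|: Y = C) (XIY : X :&: Y = set0).

Local Notation S := (Gamma e C X).
Let e_sym : symmetric e := e_simple.1.
Let e_irr : irreflexive e := e_simple.2.

Lemma adj_eqF a b : e a b -> (a == b) = false.
Proof. by move=> eab; apply: contraTF eab => /eqP ->; rewrite e_irr. Qed.

Lemma X_sub_C : {subset X <= C}.
Proof. by move=> x xX; rewrite -XUY inE xX. Qed.

Lemma Y_sub_C : {subset Y <= C}.
Proof. by move=> y yY; rewrite -XUY inE yY orbT. Qed.

Lemma Y_notin_X y : y \in Y -> (y \in X) = false.
Proof. by move=> yY; apply/negP => yX; have := in_set0 y; rewrite -XIY inE yX yY. Qed.

Lemma Gamma_notin_C v : v \in S -> (v \in C) = false.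
Proof. by rewrite inE => /andP[/negbTE]. Qed.

Lemma Gamma_adj v c : v \in S -> c \in C -> e v c = (c \in X).
Proof. by rewrite inE => /andP[_ /eqP <-] cC; rewrite inE cC. Qed.

Lemma Gamma_clique_le : (forall D, is_clique e D -> #|D| <= #|C|) -> clique_le e S #|Y|.
Proof.
move=> C_max K KS K_clique.
have XK0 : X :&: K = set0.
  apply/setP => v; rewrite !inE; apply/negbTE/andP => -[/X_sub_C vC /(subsetP KS) vS].
  by rewrite Gamma_notin_C in vC.
have XK_clique : is_clique e (X :|: K).
  apply/forallP => a; apply/implyP => aXK; apply/forallP => b; apply/implyP => bXK.
  apply/implyP => ab; move: aXK bXK; rewrite !inE => /orP[aX|aK] /orP[bX|bK].
  - by apply: (clique_adj C_clique); rewrite ?X_sub_C.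
  - by rewrite e_sym Gamma_adj ?(subsetP KS) ?X_sub_C.
  - by rewrite Gamma_adj ?(subsetP KS) ?X_sub_C.
  - exact: (clique_adj K_clique).
have := C_max _ XK_clique; rewrite cardsU XK0 cards0 subn0 -XUY cardsU XIY cards0 subn0.
by rewrite leq_add2l.
Qed.

Lemma Gamma_P3_free : in_F e -> X != set0 -> Y != set0 -> P3_free e S.
Proof.
move=> e_F /set0Pn[x xX] /set0Pn[y yY] p q r pS qS rS epq eqr pr.
apply/negPn/negP => /negbTE npr; apply: (in_F_no_diamond_pendant e_F).
have xC := X_sub_C xX; have yC := Y_sub_C yY.
have Sx v : v \in S -> e v x by move=> vS; rewrite Gamma_adj.
have Sy v : v \in S -> e v y = false by move=> vS; rewrite Gamma_adj ?Y_notin_X.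
have exy : e x y.
  by apply: (clique_adj C_clique) => //; apply/eqP => xy; move: xX; rewrite xy Y_notin_X.
have neq_C c v : c \in C -> v \in S -> (v == c) = false.
  by move=> cC vS; apply: contraFF (Gamma_notin_C vS) => /eqP ->.
apply: (@induced_copy_nth _ _ p [:: p; q; r; x; y]).
  rewrite /= !inE (adj_eqF epq) (adj_eqF eqr) (adj_eqF exy) (negbTE pr).
  by rewrite !(neq_C x) // !(neq_C y).
pose adj := (Sx _ pS, Sx _ qS, Sx _ rS, Sy _ pS, Sy _ qS, Sy _ rS, epq, eqr, npr, exy).
move=> i j; rewrite !inE.
case: i => [|[|[|[|[|//]]]]] _; case: j => [|[|[|[|[|//]]]]] _;
  by rewrite /= ?e_irr ?adj // e_sym ?adj.
Qed.

Lemma Gamma_triangle_free : in_F e -> X != set0 -> 4 <= #|Y| -> clique_le e S 2.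
Proof.
move=> e_F /set0Pn[x xX] Y_ge4 K KS K_clique; rewrite leqNgt; apply/negP => K_gt2.
have [ts [ts_size ts_uniq tsK]] := uniq_seq_of_card K_gt2.
have [ys [ys_size ys_uniq ysY]] := uniq_seq_of_card Y_ge4.
apply: (in_F_no_K4_K5_glued e_F); set s := ts ++ x :: ys.
have s_size : size s = 8 by rewrite size_cat /= ts_size ys_size.
have tsS t : t \in ts -> t \in S by move/tsK/(subsetP KS).
have vs_cases m : m < size s -> m < 3 /\ nth x s m \in K \/
    [/\ 3 <= m, nth x s m \in C & (nth x s m \in X) = (m == 3)].
  rewrite s_size => m_lt8; rewrite nth_cat ts_size; case: ltngtP => [m_lt3|m_gt3|->].
  - by left; split=> //; apply/tsK/mem_nth; rewrite ts_size.
  - have -> : m - 3 = (m - 4).+1 by lia.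
    have y_in : nth x ys (m - 4) \in Y by apply/ysY/mem_nth; rewrite ys_size; lia.
    by right; rewrite Y_sub_C // Y_notin_X //; split=> //; lia.
  - by rewrite subnn; right; rewrite X_sub_C // xX.
have s_uniq : uniq s.
  rewrite cat_uniq ts_uniq cons_uniq ys_uniq andbT; apply/and3P; split=> //.
    apply/hasPn => c c_in; apply/negP => /tsS/Gamma_notin_C.
    by case/predU1P: c_in => [-> | /ysY]; [rewrite X_sub_C | move/Y_sub_C ->].
  by apply/negP => /ysY/Y_notin_X; rewrite xX.
rewrite -s_size; apply: (induced_copy_nth (x0 := x) s_uniq) => i j; rewrite !inE => i_lt j_lt.
rewrite /K4_K5_glued.
have [<- | ij] := eqVneq i j; first by rewrite e_irr.
have vij : nth x s i != nth x s j by rewrite nth_uniq.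
have KS' := subsetP KS.
case: (vs_cases i i_lt) (vs_cases j j_lt) => [[i_lt3 iK]|[i_ge3 iC iX]] [[j_lt3 jK]|[j_ge3 jC jX]].
- by rewrite (clique_adj K_clique) //; clear -i_lt3 j_lt3; lia.
- by rewrite Gamma_adj ?KS' // jX; clear -i_lt3 j_ge3; lia.
- by rewrite e_sym Gamma_adj ?KS' // iX; clear -i_ge3 j_lt3; lia.
- by rewrite (clique_adj C_clique) //; clear -i_ge3 j_ge3; lia.
Qed.

Lemma Gamma_union_K123 : in_F e -> (forall D, is_clique e D -> #|D| <= #|C|) ->
    X != set0 -> Y != set0 ->
  [/\ #|Y| = 1 -> exists l, union_K123 e S l 0 0,
      #|Y| = 2 -> exists l k, union_K123 e S l k 0,
      #|Y| = 3 -> exists l k m, union_K123 e S l k m &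
      4 <= #|Y| -> exists l k, union_K123 e S l k 0].
Proof.
move=> e_F C_max X0 Y0.
have decomp := union_K123_of_P3_free e_sym (Gamma_P3_free e_F X0 Y0).
have S_clique_le := Gamma_clique_le C_max.
split=> [Y1 | Y2 | Y3 | Y_ge4].
- rewrite Y1 in S_clique_le; have [l [k [m [U k0 m0]]]] := decomp 1 isT S_clique_le.
  by rewrite (k0 isT) (m0 isT) in U; exists l.
- rewrite Y2 in S_clique_le; have [l [k [m [U _ m0]]]] := decomp 2 isT S_clique_le.
  by rewrite (m0 isT) in U; exists l, k.
- rewrite Y3 in S_clique_le; have [l [k [m [U _ _]]]] := decomp 3 isT S_clique_le.
  by exists l, k, m.
- have [l [k [m [U _ m0]]]] := decomp 2 isT (Gamma_triangle_free e_F X0 Y_ge4).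
  by rewrite (m0 isT) in U; exists l, k.
Qed.

End Gamma.

Theorem proposition4p3 (n : nat) (e : rel 'I_n) (C X Y : {set 'I_n}) :
  in_F e ->
  max_clique e C ->
  (forall D : {set 'I_n}, max_clique e D -> cut_size e C <= cut_size e D) ->
  X :|: Y = C -> X :&: Y = set0 -> X != set0 -> Y != set0 ->
  (forall v, v \notin C ->
     [\/ nbhd_in e C v = X, nbhd_in e C v = Y | nbhd_in e C v = set0]) ->
  let a := #|X| in let b := #|Y| in
  let GX := Gamma e C X in let GY := Gamma e C Y in
  [/\ (b = 1 -> exists l, union_K123 e GX l 0 0),
      (b = 2 -> exists l k, union_K123 e GX l k 0),
      (b = 3 -> exists l k m, union_K123 e GX l k m) &
      (4 <= b -> exists l k, union_K123 e GX l k 0)] /\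
  [/\ (a = 1 -> exists l, union_K123 e GY l 0 0),
      (a = 2 -> exists l k, union_K123 e GY l k 0),
      (a = 3 -> exists l k m, union_K123 e GY l k m) &
      (4 <= a -> exists l k, union_K123 e GY l k 0)].
Proof.
move=> e_F [C_clique C_max] _ XUY XIY X0 Y0 _ a b GX GY.
have e_simple : simple_graph e := e_F.1.
split; first exact: Gamma_union_K123.
by apply: Gamma_union_K123 => //; rewrite 1?setUC 1?setIC.
Qed.
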